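(* Let $\Gamma$ be a Deza graph with parameters $(n,k,k-1,a)$, $k>1$, $\beta=1$. The set of $NA$-vertices of $\Gamma$ can be partitioned into quadruples of the form $\{x,x',x_b,x_b'\}$, where $x_b'=(x')_b=(x_b)'$.
   Context: A Deza graph with parameters $(n,k,b,a)$, $a\le b$, is a $k$-regular graph on $n$ vertices in which any two distinct vertices have $a$ or $b$ common neighbours; $\beta$ is the number of vertices $u\ne v$ with exactly $b$ common neighbours with a given vertex $v$. Since $\beta=1$, for each vertex $x$ let $x_b$ denote the unique vertex having $b=k-1$ common neighbours with $x$. A vertex $x$ is an $A$-vertex if $x$ is adjacent to $x_b$, and an $NA$-vertex otherwise. For an $NA$-vertex $x$, $x'$ denotes the unique neighbour of $x$ not adjacent to $x_b$; one has $(x')_b=(x_b)'$, denoted $x_b'$. *)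

From mathcomp Require Import all_boot.
Set Implicit Arguments. Unset Strict Implicit. Unset Printing Implicit Defensive.

(* A simple graph on a finite vertex type T: a symmetric irreflexive relation e. *)
Section Deza.
Variables (T : finType) (e : rel T).

Definition nbhd (x : T) : {set T} := [set y | e x y].

Definition common (x y : T) : nat := #|[set z | e x z && e y z]|.

Definition deza_graph (n k b a : nat) : Prop :=
  [/\ #|T| = n, a <= b,
      (forall x : T, #|nbhd x| = k) &
      (forall x y : T, x != y -> common x y = a \/ common x y = b)].

Definition beta_at (b : nat) (v : T) : nat :=
  #|[set u | (u != v) && (common v u == b)]|.

(* x_b: the (unique, when beta = 1) vertex with b common neighbours with x *)
Definition xb (b : nat) (x : T) : T :=
  odflt x [pick u | (u != x) && (common x u == b)].

Definition NA (b : nat) (x : T) : bool := ~~ e x (xb b x).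

Definition xprime (b : nat) (x : T) : T :=
  odflt x [pick y | e x y && ~~ e y (xb b x)].

End Deza.

From mathcomp Require Import all_boot.

(* Since x and x_b have k-1 common neighbours, x has exactly one neighbour x'
   outside N(x_b); this holds for every vertex.  Any w other than x, x_b has a
   common neighbours with both x and x_b, and N(x) ∩ N(x_b) contributes equally
   to both counts, so w ~ x' iff w ~ (x_b)'.  For an NA-vertex x this gives
   N(x') ∩ N((x_b)') = N(x') \ {x}, of size k-1, hence (x')_b = (x_b)'; then x'
   is again an NA-vertex with x'' = x.  So {x, x', x_b, x_b'} is closed under
   both maps, and these quadruples partition the NA-vertices. *)

Set Implicit Arguments.
Unset Strict Implicit.
Unset Printing Implicit Defensive.

Lemma card1_pickE (T : finType) (P : pred T) (d : T) :
  #|[set y | P y]| = 1 -> forall y, P y = (y == odflt d [pick y | P y]).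
Proof.
move=> /eqP/cards1P[u Pu].
have PE y : P y = (y == u) by rewrite -in_set1 -Pu inE.
case: pickP => [v|/(_ u)]; last by rewrite PE eqxx.
by rewrite PE => /eqP->.
Qed.

Lemma card_set4 (T : finType) (x1 x2 x3 x4 : T) :
  uniq [:: x1; x2; x3; x4] -> #|[set x1; x2; x3; x4]| = 4.
Proof.
move=> /card_uniqP /= <-; apply: eq_card => t.
by rewrite !inE -!orbA.
Qed.

Lemma partition_imset (T : finType) (D : {set T}) (f : T -> {set T}) :
  (forall x, x \in f x) ->
  (forall x y, x \in D -> y \in f x -> y \in D /\ f y = f x) ->
  partition (f @: D) D.
Proof.
move=> f_refl f_closed.
suff -> : f @: D = preim_partition f D by apply: preim_partitionP.
rewrite /preim_partition /equivalence_partition.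
apply: eq_in_imset => x xD /=; apply/setP=> y; rewrite inE.
apply/idP/andP=> [/(f_closed x y xD)[yD ->] | [_ /eqP->]] //.
Qed.

Lemma card_set1I (T : finType) (u : T) (A : {set T}) : #|[set u] :&: A| = (u \in A).
Proof.
have [uA | /negbTE nuA] := boolP (u \in A).
  by rewrite (setIidPl _) ?cards1 // sub1set.
by apply/eqP; rewrite cards_eq0 setI_eq0 disjoints1 nuA.
Qed.

Section DezaBeta1.

Variables (T : finType) (e : rel T) (k a : nat).
Hypotheses (e_sym : symmetric e) (e_irr : irreflexive e) (k_gt0 : 0 < k).
Hypothesis regular : forall x, #|nbhd e x| = k.
Hypothesis deza : forall x y, x != y -> common e x y = a \/ common e x y = k.-1.
Hypothesis beta1 : forall x, beta_at e k.-1 x = 1.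

Local Notation b := k.-1.

Lemma commonE x y : common e x y = #|nbhd e x :&: nbhd e y|.
Proof. by apply: eq_card => t; rewrite !inE. Qed.

Lemma commonC x y : common e x y = common e y x.
Proof. by rewrite !commonE setIC. Qed.

Lemma xb_unique x u : (u != x) && (common e x u == b) = (u == xb e b x).
Proof. exact: card1_pickE (beta1 x) u. Qed.

Lemma xb_neq x : xb e b x != x.
Proof. by have := xb_unique x (xb e b x); rewrite eqxx => /andP[]. Qed.

Lemma common_xb x : common e x (xb e b x) = b.
Proof. by have := xb_unique x (xb e b x); rewrite eqxx => /andP[_ /eqP]. Qed.

Lemma xbK : involutive (xb e b).
Proof.
move=> x; apply/esym/eqP.
by rewrite -xb_unique eq_sym xb_neq commonC common_xb eqxx.
Qed.

Lemma common_eq_a v w : w != v -> w != xb e b v -> common e v w = a.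
Proof.
move=> wv wvb; have vw : v != w by rewrite eq_sym.
case: (deza vw) => // /eqP cb.
by rewrite -xb_unique wv cb in wvb.
Qed.

Lemma card_nbhd_diff_xb x : #|nbhd e x :\: nbhd e (xb e b x)| = 1.
Proof.
by rewrite cardsD regular -commonE common_xb -[k in k - _](prednK k_gt0) subSnn.
Qed.

Lemma xprime_unique x y : e x y && ~~ e y (xb e b x) = (y == xprime e b x).
Proof.
have card1 : #|[set y | e x y && ~~ e y (xb e b x)]| = 1.
  rewrite -(card_nbhd_diff_xb x); apply: eq_card => t.
  by rewrite !inE andbC (e_sym t).
exact: card1_pickE card1 y.
Qed.

Lemma xprime_adj x : e x (xprime e b x).
Proof. by have := xprime_unique x (xprime e b x); rewrite eqxx => /andP[]. Qed.

Lemma xprime_nadj_xb x : ~~ e (xprime e b x) (xb e b x).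
Proof. by have := xprime_unique x (xprime e b x); rewrite eqxx => /andP[]. Qed.

Lemma xprime_neq x : xprime e b x != x.
Proof. by apply: contraTneq (xprime_adj x) => ->; rewrite e_irr. Qed.

Lemma nbhd_diff_xb x : nbhd e x :\: nbhd e (xb e b x) = [set xprime e b x].
Proof.
by apply/setP=> t; rewrite !inE -xprime_unique andbC (e_sym t).
Qed.

Lemma common_split v w :
  common e v w =
  #|nbhd e v :&: nbhd e (xb e b v) :&: nbhd e w| + e w (xprime e b v).
Proof.
rewrite commonE -(cardsID (nbhd e (xb e b v))) setIAC -setIDAC nbhd_diff_xb.
by rewrite card_set1I inE.
Qed.

Lemma xprime_xb_adj x w :
  w != x -> w != xb e b x -> e w (xprime e b x) = e w (xprime e b (xb e b x)).
Proof.
move=> wx wxb.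
have := common_split (xb e b x) w; have := common_split x w.
rewrite xbK (setIC (nbhd e (xb e b x))) !common_eq_a ?xbK // => -> /addnI.
by case: (e w _); case: (e w _).
Qed.

Lemma NA_xb x : NA e b x -> NA e b (xb e b x).
Proof. by rewrite /NA xbK e_sym. Qed.

Lemma xprime_neq_xb x : NA e b x -> xprime e b x != xb e b x.
Proof. by move=> NAx; apply: contraNneq NAx => <-; rewrite xprime_adj. Qed.

Lemma xprime_xb_nadj x : ~~ e (xprime e b (xb e b x)) x.
Proof. by have := xprime_nadj_xb (xb e b x); rewrite xbK. Qed.

Lemma xprime_xb_neq x : NA e b x -> xprime e b (xb e b x) != x.
Proof. by move=> NAx; have := xprime_neq_xb (NA_xb NAx); rewrite xbK. Qed.

Lemma xb_xprime x : NA e b x -> xb e b (xprime e b x) = xprime e b (xb e b x).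
Proof.
move=> NAx; set y := xprime e b x; set z := xprime e b (xb e b x).
have nzx : ~~ e z x by apply: xprime_xb_nadj.
have yz : y != z by apply: contraNneq nzx => <-; rewrite e_sym xprime_adj.
have nbhd_yz : nbhd e y :&: nbhd e z = nbhd e y :\ x.
  apply/setP=> t; rewrite !inE.
  have [-> | tx] := eqVneq t x; first by rewrite (negbTE nzx) andbF.
  have [-> | txb] := eqVneq t (xb e b x).
    by rewrite (negbTE (xprime_nadj_xb x)).
  by rewrite (e_sym y) (e_sym z) xprime_xb_adj // andbb.
have := cardsD1 x (nbhd e y); rewrite regular inE e_sym xprime_adj add1n => k_eq.
by apply/esym/eqP; rewrite -xb_unique eq_sym yz commonE nbhd_yz k_eq /=.
Qed.

Lemma NA_xprime x : NA e b x -> NA e b (xprime e b x).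
Proof.
move=> NAx; rewrite /NA xb_xprime // e_sym.
by rewrite xprime_xb_adj ?xprime_neq ?xprime_xb_neq ?e_irr.
Qed.

Lemma xprimeK x : NA e b x -> xprime e b (xprime e b x) = x.
Proof.
move=> NAx; apply/esym/eqP.
by rewrite -xprime_unique xb_xprime // e_sym xprime_adj e_sym xprime_xb_nadj.
Qed.

Definition quad x := [set x; xprime e b x; xb e b x; xb e b (xprime e b x)].

Lemma mem_quad x : x \in quad x.
Proof. by rewrite !inE eqxx. Qed.

Lemma card_quad x : NA e b x -> #|quad x| = 4.
Proof.
move=> NAx; apply: card_set4; rewrite /= !inE !negb_or.
rewrite (inj_eq (can_inj xbK)) !(eq_sym x) xb_neq xprime_neq (canF_eq xbK).
by rewrite xprime_neq_xb // eq_sym xb_neq.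
Qed.

Lemma quad_xprime x : NA e b x -> quad (xprime e b x) = quad x.
Proof. by move=> NAx; rewrite /quad xprimeK // -setUAC (setUC [set _]). Qed.

Lemma quad_xb x : NA e b x -> quad (xb e b x) = quad x.
Proof.
move=> NAx; rewrite /quad xbK -xb_xprime // xbK.
by rewrite -setUA setUC setUA.
Qed.

Lemma quad_closed x y :
  NA e b x -> y \in quad x -> NA e b y /\ quad y = quad x.
Proof.
move=> NAx; rewrite !inE -!orbA => /or4P[] /eqP->.
- by [].
- by rewrite NA_xprime // quad_xprime.
- by rewrite NA_xb // quad_xb.
- by rewrite NA_xb ?NA_xprime // quad_xb ?NA_xprime // quad_xprime.
Qed.

End DezaBeta1.

Theorem lemma14 (T : finType) (e : rel T) (n k a : nat) :
  symmetric e -> irreflexive e ->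
  1 < k ->
  deza_graph e n k k.-1 a ->
  (forall v : T, beta_at e k.-1 v = 1) ->
  exists P : {set {set T}},
    partition P [set x | NA e k.-1 x] /\
    (forall B, B \in P ->
       exists x : T,
         [/\ NA e k.-1 x,
             B = [set x; xprime e k.-1 x; xb e k.-1 x; xb e k.-1 (xprime e k.-1 x)],
             #|B| = 4 &
             xb e k.-1 (xprime e k.-1 x) = xprime e k.-1 (xb e k.-1 x)]).
Proof.
move=> e_sym e_irr /ltnW k_gt0 [_ _ regular deza] beta1.
exists (quad e k @: [set x | NA e k.-1 x]); split.
  apply: partition_imset => [x | x y]; first exact: mem_quad.
  by rewrite [x \in _]inE [y \in [set _ | _]]inE; apply: (quad_closed (a := a)).
move=> B /imsetP[x]; rewrite inE => NAx ->.
by exists x; split=> //; [apply: card_quad | apply: (xb_xprime (a := a))].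
Qed.
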